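(* Let $T=K_2$ (the tree on $n=2$ vertices) and $k\ge2$, and let $M$ be the order-$k$ Steiner distance hypermatrix of $T$. If $\det(M)\neq0$, then $\det(M)<0$, i.e., $\operatorname{sgn}(\det(M))=(-1)^{n-1}=-1$.
   Context: For $K_2$ with vertices $1,2$, the order-$k$ Steiner distance hypermatrix $M$ has $(i_1,\dots,i_k)$ entry equal to $0$ if $i_1=\dots=i_k$ and $1$ otherwise (the Steiner distance of a vertex set is the minimum number of edges of a connected subgraph containing it). $\det$ denotes the hyperdeterminant of a symmetric hypermatrix: the unique irreducible polynomial in the entries, normalized so that the identity hypermatrix has value $1$, vanishing exactly when $\sum_{i_2,\dots,i_k}M_{a i_2\cdots i_k}x_{i_2}\cdots x_{i_k}=0$ for all $a$ has a nonzero complex solution. *)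

From HB Require Import structures.
From mathcomp Require Import all_boot all_order all_algebra.
Set Implicit Arguments. Unset Strict Implicit. Unset Printing Implicit Defensive.
Import Order.TTheory GRing.Theory Num.Theory.
Local Open Scope ring_scope.

(* Hypermatrices of dimension 2 (vertex set 'I_2 = {1,2} of K_2): an entry
   function on index sequences; an order-k hypermatrix is read on sequences
   of length k. *)
Definition hmat (R : Type) := seq 'I_2 -> R.

(* Steiner distance in K_2 (vertices ord0, ord_max, one edge):
   a vertex set with at most one vertex is spanned by 0 edges,
   the whole vertex set needs the single edge. *)
Definition steinerK2 (S : {set 'I_2}) : nat :=
  if (#|S| <= 1)%N then 0%N else 1%N.

Definition steinerHmatK2 : hmat int := fun s => (steinerK2 [set x in s])%:Z.

(* Coefficient of x_1^(k-1-i) x_2^i in the form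
   f_a(x) = sum_{i_2..i_k} M_{a i_2 .. i_k} x_{i_2} ... x_{i_k}. *)
Definition hcoef (R : comNzRingType) (k : nat) (M : hmat R) (a : 'I_2) (i : nat) : R :=
  \sum_(t : (k.-1).-tuple 'I_2 | count_mem ord_max t == i) M (a :: t).

(* Sylvester matrix of two binary forms of (formal) degree d, given by their
   coefficient lists a_0..a_d and b_0..b_d (a_i = coeff of x1^(d-i) x2^i). *)
Definition sylvesterForms (R : comNzRingType) (d : nat) (a b : nat -> R) : 'M[R]_(d + d) :=
  \matrix_(r, c)
    match split r with
    | inl i => if (i <= c <= i + d)%N then a (c - i)%N else 0
    | inr j => if (j <= c <= j + d)%N then b (c - j)%N else 0
    end.

(* Hyperdeterminant of an order-k, dimension-2 symmetric hypermatrix: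
   the resultant of the binary forms f_1, f_2 of degree k-1
   (normalized so that the identity hypermatrix has value 1). *)
Definition hdet2 (R : comNzRingType) (k : nat) (M : hmat R) : R :=
  \det (sylvesterForms (k.-1) (hcoef k M ord0) (hcoef k M ord_max)).

From mathcomp Require Import all_boot all_order all_algebra all_field.
From mathcomp Require Import zify.
Import Order.TTheory GRing.Theory Num.Theory.
Local Open Scope ring_scope.

(* With d = k - 1 and y = x_2 / x_1, the two forms of the Steiner hypermatrix
   of K_2 are f_1 = (1 + y)^d - 1 and f_2 = (1 + y)^d - y^d.  The roots of f_1
   are y_m = w^m - 1 for a primitive d-th root of unity w, so the resultant is
   (-1)^d prod_m f_2(y_m) = (-1)^d prod_m (1 - (w^m - 1)^d).  The factor m = 0
   is 1 and the factors m and d - m are complex conjugate, so this is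
   -|A|^2 for odd d and |A|^2 (1 - 2^d) for even d (the middle factor has
   w^(d/2) = -1): in both cases it is <= 0. *)

Lemma sum_band_expr (R : comNzRingType) d (a : nat -> R) (i : nat) (x : R) :
  (i < d)%N ->
  \sum_(c < d + d) (if (i <= c <= i + d)%N then a (c - i)%N else 0) * x ^+ c
  = x ^+ i * \sum_(j < d.+1) a j * x ^+ j.
Proof.
move=> lt_id.
rewrite -(big_mkord xpredT
  (fun c => (if (i <= c <= i + d)%N then a (c - i)%N else 0) * x ^+ c)).
rewrite (@big_cat_nat _ _ _ i) //=; last by lia.
rewrite (@big_cat_nat _ _ _ (i + d.+1) i) //=; [|lia|lia].
rewrite big1_seq ?add0r => [|c /andP[_]]; last first.
  by rewrite mem_index_iota => /andP[_ lt_ci]; rewrite leqNgt lt_ci mul0r.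
rewrite [X in _ + X]big1_seq ?addr0 => [|c /andP[_]]; last first.
  rewrite mem_index_iota => /andP[le_ic _].
  have -> : (c <= i + d)%N = false by lia.
  by rewrite andbF mul0r.
rewrite -{1}(add0n i) big_addn addnC addnK big_mkord mulr_sumr.
apply: eq_bigr => j _.
have -> : (i <= j + i <= i + d)%N by case: j => j /= lt_jd; lia.
by rewrite addnK exprD mulrA mulrC.
Qed.

Lemma det_block_swap (R : comNzRingType) n :
  \det (block_mx 0 1%:M 1%:M 0 : 'M[R]_(n + n)) = (-1) ^+ n.
Proof.
have E : (block_mx 0 1%:M 1%:M 0 : 'M[R]_(n + n)) *m block_mx 1%:M 1%:M 0 1%:M
   *m block_mx 1%:M 0 (-1%:M) 1%:M = block_mx (-1%:M) 1%:M 0 1%:M.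
  rewrite !mulmx_block !(mulmx0, mul0mx, mulmx1, mul1mx, addr0, add0r, mulmxN).
  by rewrite addrN.
move/(congr1 determinant): E.
rewrite !det_mulmx det_ublock det_lblock det_ublock !det1 -raddfN det_scalar.
by rewrite !(mulr1, mul1r).
Qed.

Lemma det_block0ul (R : comNzRingType) n (B C D : 'M[R]_n) :
  \det (block_mx 0 B C D) = (-1) ^+ n * \det B * \det C.
Proof.
have -> : block_mx 0 B C D = block_mx B 0 D C *m block_mx 0 1%:M 1%:M 0.
  by rewrite mulmx_block !mulmx0 !mulmx1 !addr0 !add0r.
by rewrite det_mulmx det_lblock det_block_swap mulrC mulrA.
Qed.

Lemma split_lshift m n (i : 'I_m) : split (lshift n i) = inl i.
Proof. exact: (unsplitK (inl _ i)). Qed.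

Lemma split_rshift m n (i : 'I_n) : split (rshift m i) = inr i.
Proof. exact: (unsplitK (inr _ i)). Qed.

(* Poisson's formula: multiplying the Sylvester matrix by the Vandermonde
   matrix of the roots of [a] kills the upper half and evaluates [b] at the
   roots in the lower half. *)
Lemma det_sylvesterForms_roots (R : fieldType) d (a b : nat -> R) (r : 'I_d -> R) :
  a d = 1 -> injective r -> (forall m, \sum_(j < d.+1) a j * r m ^+ j = 0) ->
  \det (sylvesterForms d a b) =
    (-1) ^+ d * \prod_(m < d) \sum_(j < d.+1) b j * r m ^+ j.
Proof.
move=> ad1 r_inj a_r.
set S := sylvesterForms d a b.
pose B m := \sum_(j < d.+1) b j * r m ^+ j.
pose V : 'M[R]_(d + d, d) := \matrix_(c, m) r m ^+ c.
pose Vd : 'M[R]_d := Vandermonde d (\row_m r m).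
pose Y : 'M[R]_d := Vd *m diag_mx (\row_m B m).
pose W : 'M[R]_(d + d) := row_mx (col_mx 0 1%:M) V.
have SV : S *m V = col_mx 0 Y.
  apply/matrixP => i m.
  case: (split_ordP i) => {}i ->; rewrite ?col_mxEu ?col_mxEd.
    rewrite !mxE; under eq_bigr do rewrite !mxE split_lshift.
    by rewrite sum_band_expr // a_r mulr0.
  rewrite /Y mul_mx_diag [LHS]mxE; under eq_bigr do rewrite !mxE split_rshift.
  by rewrite sum_band_expr // !mxE.
have SW : S *m W = block_mx (usubmx (rsubmx S)) 0 (dsubmx (rsubmx S)) Y.
  rewrite mul_mx_row SV block_mxEh vsubmxK.
  by rewrite -[S in LHS]hsubmxK mul_row_col mulmx0 mulmx1 add0r.
have detSur : \det (usubmx (rsubmx S)) = 1.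
  rewrite det_trig; last first.
    apply/is_trig_mxP => i j lt_ij; rewrite !mxE split_lshift.
    by have -> : (i <= d + j <= i + d)%N = false by lia.
  rewrite big1 // => i _; rewrite !mxE split_lshift.
  have -> : (i <= d + i <= i + d)%N by lia.
  by rewrite addnK.
have detW : \det W = (-1) ^+ d * \det Vd.
  rewrite /W -[V]vsubmxK -block_mxEh det_block0ul det1 mulr1.
  by congr (_ * \det _); apply/matrixP => c m; rewrite !mxE.
have detVd : \det Vd != 0.
  rewrite det_Vandermonde; apply/prodf_neq0 => i _; apply/prodf_neq0 => j lt_ij.
  rewrite !mxE subr_eq0; apply: contraTneq lt_ij => /r_inj ->.
  by rewrite ltnn.
move/(congr1 determinant): SW.
rewrite det_mulmx det_lblock detSur mul1r det_mulmx det_diag detW => detSW.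
have {}detSW : \det S * (-1) ^+ d = \prod_(m < d) B m.
  apply: (mulIf detVd); rewrite -mulrA detSW mulrC.
  by congr (_ * _); apply: eq_bigr => m _; rewrite mxE.
by rewrite -detSW mulrCA -expr2 exprAC sqrrN !expr1n mulr1.
Qed.

Lemma map_sylvesterForms (R S : comNzRingType) (f : R -> S) d (a b : nat -> R) :
  f 0 = 0 ->
  map_mx f (sylvesterForms d a b) = sylvesterForms d (f \o a) (f \o b).
Proof.
move=> f0; apply/matrixP => i c; rewrite !mxE.
by case: (split i) => j; case: ifP.
Qed.

Lemma I2_cases (x : 'I_2) : x = ord0 \/ x = ord_max.
Proof. by case: x => [[|[|n]] lt_n2]; [left|right|]; try apply: val_inj. Qed.

Lemma card_I2_set (A : {set 'I_2}) : #|A| = ((ord0 \in A) + (ord_max \in A))%N.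
Proof.
rewrite -sum1_card big_mkcond big_ord_recl big_ord1 /=.
have -> : lift ord0 ord0 = ord_max :> 'I_2 by apply: val_inj.
by case: (ord0 \in A); case: (ord_max \in A).
Qed.

Lemma steinerHmatK2_cons (a : 'I_2) (t : seq 'I_2) :
  steinerHmatK2 (a :: t) = (if a == ord0 then ord_max \in t else ord0 \in t)%:R.
Proof.
rewrite /steinerHmatK2 /steinerK2 card_I2_set !inE.
by case: (I2_cases a) => ->; case: (ord0 \in t); case: (ord_max \in t).
Qed.

Section TuplesOfSets.
Variable d : nat.

Definition tuple_of_set (A : {set 'I_d}) : d.-tuple 'I_2 :=
  [tuple if j \in A then ord_max else ord0 | j < d].

Definition set_of_tuple (t : d.-tuple 'I_2) : {set 'I_d} :=
  [set j | tnth t j == ord_max].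

Lemma tuple_of_setK : cancel tuple_of_set set_of_tuple.
Proof. by move=> A; apply/setP => j; rewrite inE tnth_mktuple; case: (j \in A). Qed.

Lemma set_of_tupleK : cancel set_of_tuple tuple_of_set.
Proof.
move=> t; apply: eq_from_tnth => j; rewrite tnth_mktuple inE.
by case: (I2_cases (tnth t j)) => ->.
Qed.

Lemma count_tuple_of_set (A : {set 'I_d}) :
  count_mem ord_max (tuple_of_set A) = #|A|.
Proof.
rewrite /= count_map cardE /enum_mem size_filter count_filter.
by apply: eq_count => j /=; rewrite andbT; case: (j \in A).
Qed.

Lemma card_tuples_count_mem i :
  #|[pred t : d.-tuple 'I_2 | count_mem ord_max t == i]| = 'C(d, i).
Proof.
rewrite -[d in 'C(d, i)]card_ord -card_draws -!sum1_card.
rewrite (reindex tuple_of_set); last first.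
  exact/onW_bij/(Bijective tuple_of_setK set_of_tupleK).
by apply: eq_bigl => A; rewrite !inE count_tuple_of_set.
Qed.

End TuplesOfSets.

Lemma hcoef_steinerHmatK2 d (a : 'I_2) i :
  hcoef d.+1 steinerHmatK2 a i =
    ('C(d, i) * (if a == ord0 then 0 < i else i < d))%N%:R.
Proof.
rewrite /hcoef /= -card_tuples_count_mem natrM mulr_natl -sumr_const.
apply: eq_big => [t|t /eqP count_t]; first by rewrite inE.
rewrite steinerHmatK2_cons; case: (a == ord0); rewrite -has_pred1 has_count //.
  by rewrite count_t.
have := count_predC (pred1 ord_max) t; rewrite size_tuple count_t.
have -> : count (predC (pred1 ord_max)) t = count_mem ord0 t.
  by apply: eq_count => x /=; case: (I2_cases x) => ->.
by move=> count_t0; congr (_%:R); lia.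
Qed.

Lemma sum_binomial_pos_expr (R : comNzRingType) d (y : R) :
  \sum_(j < d.+1) ('C(d, j) * (0 < j))%N%:R * y ^+ j = (1 + y) ^+ d - 1.
Proof.
rewrite exprDn big_ord_recl [in RHS]big_ord_recl /= muln0 mul0r add0r.
rewrite expr0 mulr1 expr1n bin0 addrC addKr.
by apply: eq_bigr => j _; rewrite muln1 expr1n mul1r mulr_natl.
Qed.

Lemma sum_binomial_lt_expr (R : comNzRingType) d (y : R) :
  \sum_(j < d.+1) ('C(d, j) * (j < d))%N%:R * y ^+ j = (1 + y) ^+ d - y ^+ d.
Proof.
rewrite exprDn big_ord_recr [in RHS]big_ord_recr /= ltnn muln0 mul0r addr0.
rewrite subnn expr0 mul1r binn addrK.
by apply: eq_bigr => j _; rewrite ltn_ord muln1 expr1n mul1r mulr_natl.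
Qed.

Section PrimitiveRoot.
Variables (C : numClosedFieldType) (d : nat) (w : C).
Hypotheses (d_gt0 : (0 < d)%N) (w_prim : d.-primitive_root w).

Lemma conjC_prim_root_expr m : (m <= d)%N -> (w ^+ m)^* = w ^+ (d - m).
Proof.
have wd : w ^+ d = 1 := prim_expr_order w_prim.
have w_neq0 : w != 0.
  by apply: contra_eq_neq wd => ->; rewrite expr0n gtn_eqF // eq_sym oner_neq0.
have w_conj : w * w^* = 1.
  have : `|w| ^+ d == 1 by rewrite -normrX wd normr1.
  by rewrite pexpr_eq1 ?normr_ge0 ?gtn_eqF // -normCK => /eqP ->; rewrite expr1n.
move=> le_md; apply: (@mulIf _ (w ^+ m)); first by rewrite expf_neq0.
by rewrite -exprD subnK // wd rmorphXn -exprMn mulrC w_conj expr1n.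
Qed.

Lemma prod_conj_pairs (h : nat -> C) :
  (forall m, (0 < m < d)%N -> h (d - m)%N = (h m)^*) ->
  \prod_(1 <= m < d) h m =
    \prod_(1 <= m < d | (2 * m < d)%N) h m *
    (\prod_(1 <= m < d | (2 * m < d)%N) h m)^* *
    (if odd d then 1 else h d./2).
Proof.
move=> h_conj.
set A := \prod_(1 <= m < d | (2 * m < d)%N) h m.
have upper : \prod_(1 <= m < d | ~~ (2 * m < d)%N && (2 * m != d)%N) h m = A^*.
  rewrite big_nat_rev rmorph_prod; apply: congr_big_nat => // m.
    move=> /andP[m_gt0 lt_md].
    have -> : (1 + d - m.+1 = d - m)%N by lia.
    by apply/idP/idP; lia.
  move=> /andP[_ /andP[m_gt0 lt_md]].
  have -> : (1 + d - m.+1 = d - m)%N by lia.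
  by apply: h_conj; lia.
have middle : \prod_(1 <= m < d | ~~ (2 * m < d)%N && (2 * m == d)%N) h m =
              if odd d then 1 else h d./2.
  have d_half : d = (odd d + 2 * d./2)%N by rewrite mul2n odd_double_half.
  case: ifP d_half => odd_d d_half.
    by apply: big1 => m /andP[_ /eqP]; lia.
  rewrite (@congr_big_nat _ _ _ 1 d 1 d _ (pred1 d./2) h h) // => [|m]; last first.
    by move=> /andP[m_gt0 lt_md] /=; apply/idP/idP; lia.
  rewrite big_nat1_eq.
  by have -> : (1 <= d./2 < d)%N by lia.
rewrite (bigID (fun m => (2 * m < d)%N)) /= -/A.
rewrite [\prod_(1 <= m < d | ~~ _) h m](bigID (fun m => (2 * m == d)%N)) /=.
by rewrite upper middle mulrA mulrAC.
Qed.

Lemma prim_root_expr_half : ~~ odd d -> w ^+ d./2 = -1.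
Proof.
move=> even_d; have d_half : d = (d./2 * 2)%N by rewrite muln2 even_halfK.
have : (w ^+ d./2) ^+ 2 == 1 by rewrite -exprM -d_half prim_expr_order.
rewrite sqrf_eq1 => /orP[|/eqP //].
rewrite -(expr0 w) (eq_prim_root_expr w_prim) mod0n modn_small; last by lia.
by move=> /eqP; lia.
Qed.

Lemma sign_prod_prim_root_le0 :
  (-1) ^+ d * \prod_(m < d) (1 - (w ^+ m - 1) ^+ d) <= 0.
Proof.
pose h m := 1 - (w ^+ m - 1) ^+ d.
rewrite -(big_mkord xpredT h) big_ltn // {1}/h expr0 subrr expr0n gtn_eqF //.
rewrite subr0 mul1r prod_conj_pairs => [|m /andP[_ lt_md]]; last first.
  rewrite /h -(@conjC_prim_root_expr m (ltnW lt_md)).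
  by rewrite [RHS]rmorphB rmorph1 [in RHS]rmorphXn [in RHS]rmorphB rmorph1.
rewrite -signr_odd; case: ifP => [odd_d|even_d].
  by rewrite mulr1 mulN1r oppr_le0 mul_conjC_ge0.
rewrite mul1r mulr_ge0_le0 ?mul_conjC_ge0 // /h prim_root_expr_half ?even_d //.
rewrite -opprD exprNn -signr_odd even_d mul1r subr_le0.
by rewrite exprn_ege1 // lerDl ler01.
Qed.

End PrimitiveRoot.

Theorem mainTheorem9 (k : nat) (hk : (2 <= k)%N) :
  hdet2 k steinerHmatK2 != 0 -> hdet2 k steinerHmatK2 < 0.
Proof.
case: k hk => [|d] //; rewrite ltnS => d_gt0 det_neq0.
have [w w_prim] := C_prim_root_exists d_gt0.
pose r (m : 'I_d) : algC := w ^+ m - 1.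
have r_root m : (1 + r m) ^+ d = 1.
  by rewrite addrC subrK exprAC (prim_expr_order w_prim) expr1n.
rewrite -(@ltrz0 algC) lt_neqAle intr_eq0 det_neq0 /=.
rewrite /hdet2 -det_map_mx map_sylvesterForms ?rmorph0 //.
rewrite (@det_sylvesterForms_roots _ _ _ _ r) /=.
- rewrite (eq_bigr (fun m : 'I_d => 1 - r m ^+ d)); first exact: sign_prod_prim_root_le0.
  move=> m _; under eq_bigr do rewrite /= hcoef_steinerHmatK2 rmorph_nat.
  by rewrite sum_binomial_lt_expr r_root.
- by rewrite hcoef_steinerHmatK2 rmorph_nat binn d_gt0.
- move=> i j /addIr /eqP; rewrite (eq_prim_root_expr w_prim) !modn_small //.
  by move=> /eqP /val_inj.
- move=> m; under eq_bigr do rewrite /= hcoef_steinerHmatK2 rmorph_nat.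
  by rewrite sum_binomial_pos_expr r_root subrr.
Qed.
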